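(* In $\widehat{\mathcal{C}}$ there is a morphism $\forall:\mathbb{F}^{\mathbb{I}}\to\mathbb{F}$ which is internally right adjoint to the constant map $\mathbb{F}\to\mathbb{F}^{\mathbb{I}}$, $\phi\mapsto\lambda\_.\phi$, of internal posets; i.e. in the internal logic, for all $\phi:\mathbb{F}$ and $f:\mathbb{I}\to\mathbb{F}$, $\big(\forall (i:\mathbb{I}).\ \phi\Rightarrow f(i)\big)\iff\big(\phi\Rightarrow\forall(f)\big)$.
   Context: $\mathcal{C}$ is the category of cubes: objects finite sets of names, morphisms $I\to J$ functions $J\to\mathrm{dM}(I)$ with $\mathrm{dM}(I)$ the free De Morgan algebra on $I$, composition by substitution. $\mathbb{I}$ is the cubical set $I\mapsto\mathrm{dM}(I)$, an internal De Morgan algebra. $\mathbb{F}$ is the image (as a subobject of the subobject classifier $\Omega$) of the map $\mathbb{I}\to\Omega$, $r\mapsto(r=1)$, with lattice structure inherited from $\Omega$; concretely $\mathbb{F}(I)$ is the distributive lattice generated by symbols $(i=0),(i=1)$ for $i\in I$ subject to $(i=0)\wedge(i=1)=0$. *)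

From mathcomp Require Import all_boot.
Set Implicit Arguments. Unset Strict Implicit. Unset Printing Implicit Defensive.

Definition upclosedb (T : finType) (le : rel T) (S : {set T}) : bool :=
  [forall x, forall y, ((x \in S) && le x y) ==> (y \in S)].

Lemma upclosedP (T : finType) (le : rel T) (S : {set T}) x y :
  upclosedb le S -> x \in S -> le x y -> y \in S.
Proof. by move=> /forallP/(_ x)/forallP/(_ y)/implyP H Hx Hl; apply: H; rewrite Hx. Qed.

(* Free De Morgan algebra dM(I) on the finite set of names I = 'I_m.   *)
(* Literals: (i, true) stands for i, (i, false) stands for ~ i.        *)
(* A clause is a finite set of literals (read as their meet).  The     *)
(* underlying lattice is the free bounded distributive lattice on the  *)
(* 2m literals, represented by the up-closed set of clauses whose meet *)
(* lies below the element (join = union, meet = intersection,          *)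
(* 0 = empty, 1 = all clauses); the De Morgan involution swaps i, ~i.  *)
Definition dclause (m : nat) := {set 'I_m * bool}.
Definition subset_rel (m : nat) : rel (dclause m) := fun c c' => c \subset c'.

Definition DM (m : nat) := {S : {set dclause m} | upclosedb (@subset_rel m) S}.

Definition varDM_set m (i : 'I_m) : {set dclause m} := [set c : dclause m | (i, true) \in c].
Lemma varDM_up m (i : 'I_m) : upclosedb (@subset_rel m) (varDM_set i).
Proof.
apply/forallP=> x; apply/forallP=> y; apply/implyP=> /andP[]; rewrite !inE.
by move=> Hx /subsetP; apply.
Qed.
Definition varDM m (i : 'I_m) : DM m := exist (fun S => is_true (upclosedb _ S)) _ (varDM_up i).

(* De Morgan negation:  ~ (\/_d /\_{l in d} l) = /\_d \/_{l in d} ~ l.  *)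
Definition flipc m (c : dclause m) : dclause m := [set l : 'I_m * bool | (l.1, ~~ l.2) \notin c].
Definition negDM_set m (r : DM m) : {set dclause m} := [set c : dclause m | flipc c \notin sval r].
Lemma negDM_up m (r : DM m) : upclosedb (@subset_rel m) (negDM_set r).
Proof.
apply/forallP=> x; apply/forallP=> y; apply/implyP=> /andP[]; rewrite !inE.
move=> Hx Hxy; apply: contra Hx => Hy; apply: (upclosedP (valP r) Hy).
apply/subsetP=> l; rewrite !inE; apply: contra; exact: (subsetP Hxy).
Qed.
Definition negDM m (r : DM m) : DM m := exist (fun S => is_true (upclosedb _ S)) _ (negDM_up r).

(* Morphisms of C (skeleton: objects are the name sets 'I_m).          *)
Definition hom (k m : nat) := {ffun 'I_m -> DM k}.

Definition litDM k m (f : hom k m) (l : 'I_m * bool) : DM k :=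
  if l.2 then f l.1 else negDM (f l.1).

(* Substitution r |-> r[f] : dM(m) -> dM(k) along f : k -> m
   (the restriction maps of the cubical set I). *)
Definition substDM_set k m (f : hom k m) (r : DM m) : {set dclause k} :=
  [set c : dclause k | [exists d in sval r, [forall l in d, c \in sval (litDM f l)]]].
Lemma substDM_up k m (f : hom k m) (r : DM m) :
  upclosedb (@subset_rel k) (substDM_set f r).
Proof.
apply/forallP=> x; apply/forallP=> y; apply/implyP=> /andP[]; rewrite !inE.
move=> /existsP[d /andP[Hd /forallP H]] Hxy; apply/existsP; exists d.
rewrite Hd /=; apply/forallP=> l; apply/implyP=> Hl.
have /implyP/(_ Hl) Hx := H l.
exact: (upclosedP (valP (litDM f l)) Hx Hxy).
Qed.
Definition substDM k m (f : hom k m) (r : DM m) : DM k := exist (fun S => is_true (upclosedb _ S)) _ (substDM_up f r).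

Definition compC k' k m (g : hom k m) (h : hom k' k) : hom k' m :=
  [ffun j => substDM h (g j)].

(* The face lattice F(I): the distributive lattice generated by       *)
(* (i=0), (i=1) subject to (i=0) /\ (i=1) = 0.  A consistent clause is *)
(* a partial assignment 'I_m -> option bool (a face of the cube);      *)
(* an element is the up-closed set of consistent clauses lying below   *)
(* it.  Order = inclusion, meet = intersection, join = union.          *)
Definition face (m : nat) := {ffun 'I_m -> option bool}.
Definition leface m : rel (face m) := fun c c' =>
  [forall i, if c i is Some b then c' i == Some b else true].

Definition FF (m : nat) := {S : {set face m} | upclosedb (@leface m) S}.

Definition leF m (phi psi : FF m) : bool := sval phi \subset sval psi.

(* the face formula (r = 1) in F(k), for r in dM(k) *)
Definition clause_of m (e : face m) : dclause m := [set l : 'I_m * bool | e l.1 == Some l.2].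
Definition faceOf_set k (r : DM k) : {set face k} := [set e : face k | clause_of e \in sval r].
Lemma faceOf_up k (r : DM k) : upclosedb (@leface k) (faceOf_set r).
Proof.
apply/forallP=> x; apply/forallP=> y; apply/implyP=> /andP[]; rewrite !inE.
move=> Hx /forallP Hxy; apply: (upclosedP (valP r) Hx).
apply/subsetP=> l; rewrite !inE => /eqP Hl; have := Hxy l.1; by rewrite Hl.
Qed.
Definition faceOf k (r : DM k) : FF k := exist (fun S => is_true (upclosedb _ S)) _ (faceOf_up r).

(* restriction of F along f : k -> m: (j = 1) |-> (f j = 1),
   (j = 0) |-> (~ f j = 1) *)
Definition restrF_set k m (f : hom k m) (phi : FF m) : {set face k} :=
  [set e : face k | [exists c in sval phi,
     [forall j, if c j is Some b then e \in sval (faceOf (litDM f (j, b))) else true]]].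
Lemma restrF_up k m (f : hom k m) (phi : FF m) :
  upclosedb (@leface k) (restrF_set f phi).
Proof.
apply/forallP=> x; apply/forallP=> y; apply/implyP=> /andP[]; rewrite !inE.
move=> /existsP[c /andP[Hc /forallP H]] Hxy; apply/existsP; exists c.
rewrite Hc /=; apply/forallP=> j; have := H j; case: (c j) => // b Hx.
exact: (upclosedP (valP (faceOf (litDM f (j, b)))) Hx Hxy).
Qed.
Definition restrF k m (f : hom k m) (phi : FF m) : FF k := exist (fun S => is_true (upclosedb _ S)) _ (restrF_up f phi).

(* The exponential F^I at stage m: natural transformations             *)
(* y(m) x I -> F, i.e. families f_k(g, r) in F(k) for g : k -> m and    *)
(* r in I(k) = dM(k), natural in k.                                    *)
Record FI (m : nat) := MkFI {
  fam : forall k, hom k m -> DM k -> FF k;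
  fam_nat : forall k k' (g : hom k m) (h : hom k' k) (r : DM k),
      restrF h (fam g r) = fam (compC g h) (substDM h r)
}.
Arguments fam {m} f {k} g r.

From mathcomp Require Import all_boot.
Set Implicit Arguments. Unset Strict Implicit. Unset Printing Implicit Defensive.

(* A face of the k-cube is a partial assignment w : 'I_k -> option bool, and
   a De Morgan term r has a value on w in Kleene's three-valued logic (None
   when r is neither 1 nor 0 there).  A morphism g : k -> m therefore maps
   faces of k to faces of m, and restricting an element of F along g is
   taking inverse images under this map.  By Yoneda, for f in F^I(m) the
   value f_k(g, r) is the restriction of the generic value
   G = f_(m+1)(weaken, i), where i is the fresh name of m+1, along
   (g, r) : k -> m+1.  So forall(f) is the set of faces e of m such that
   e x I (i left free) lies in G.  It is natural because (g, r) commutes with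
   extending faces by i, and it is right adjoint to the constant map because
   e x I lies below e extended by any value of r, and G is up-closed. *)

Lemma upclosed_exists_le (T : finType) (le : rel T) (S : {set T}) c :
  reflexive le -> upclosedb le S -> [exists d in S, le d c] = (c \in S).
Proof.
move=> le_refl S_up; apply/existsP/idP => [[d /andP[Sd le_dc]] | Sc].
- exact: upclosedP S_up Sd le_dc.
- by exists c; rewrite Sc le_refl.
Qed.

Lemma leface_refl m : reflexive (@leface m).
Proof. by move=> w; apply/forallP => i; case: (w i). Qed.

Definition nonfalse_clause m (w : face m) : dclause m :=
  [set l : 'I_m * bool | w l.1 != Some (~~ l.2)].

Lemma clause_of_sub_nonfalse m (w : face m) : clause_of w \subset nonfalse_clause w.
Proof. by apply/subsetP => -[i b]; rewrite !inE /= => /eqP ->; case: b. Qed.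

Lemma flipc_clause_of m (w : face m) : flipc (clause_of w) = nonfalse_clause w.
Proof. by apply/setP => -[i b]; rewrite !inE. Qed.

Lemma flipc_nonfalse m (w : face m) : flipc (nonfalse_clause w) = clause_of w.
Proof. by apply/setP => -[i b]; rewrite !inE /= !negbK. Qed.

(* [r] is 0 on [w] iff [negDM r] is 1 there, i.e. iff
   [flipc (clause_of w) = nonfalse_clause w] is not in [r]. *)
Definition keval k (r : DM k) (w : face k) : option bool :=
  if clause_of w \in sval r then Some true
  else if nonfalse_clause w \in sval r then None else Some false.

Lemma keval_true k (r : DM k) w : (keval r w == Some true) = (clause_of w \in sval r).
Proof. by rewrite /keval; case: ifP => //; case: ifP. Qed.

Lemma keval_nonfalse k (r : DM k) w :
  (keval r w != Some false) = (nonfalse_clause w \in sval r).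
Proof.
rewrite /keval; case: ifP => [r1|_]; last by case: ifP.
by rewrite (upclosedP (valP r) r1 (clause_of_sub_nonfalse w)).
Qed.

Lemma keval_neg k (r : DM k) w : keval (negDM r) w = omap negb (keval r w).
Proof.
rewrite /keval /= !inE flipc_clause_of flipc_nonfalse.
case r1: (clause_of w \in sval r); case r_nf: (nonfalse_clause w \in sval r) => //.
by rewrite (upclosedP (valP r) r1 (clause_of_sub_nonfalse w)) in r_nf.
Qed.

Lemma keval_var k (i : 'I_k) w : keval (varDM i) w = w i.
Proof. by rewrite /keval /= !inE; case: (w i) => [[]|]. Qed.

Definition face_map k m (g : hom k m) (w : face k) : face m :=
  [ffun j => keval (g j) w].

Definition lit_eval m (v : face m) (l : 'I_m * bool) : option bool :=
  if l.2 then v l.1 else omap negb (v l.1).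

Lemma lit_eval_true m (v : face m) l : (lit_eval v l == Some true) = (l \in clause_of v).
Proof. by case: l => i []; rewrite /lit_eval /clause_of inE /=; case: (v i) => [[]|]. Qed.

Lemma lit_eval_nonfalse m (v : face m) l :
  (lit_eval v l != Some false) = (l \in nonfalse_clause v).
Proof.
by case: l => i []; rewrite /lit_eval /nonfalse_clause inE /=; case: (v i) => [[]|].
Qed.

Lemma keval_lit k m (g : hom k m) w l : keval (litDM g l) w = lit_eval (face_map g w) l.
Proof. by case: l => i []; rewrite /litDM /lit_eval ffunE // keval_neg. Qed.

Lemma exists_clause_sub k (r : DM k) (P : pred ('I_k * bool)) :
  [exists d in sval r, [forall l in d, P l]] = ([set l | P l] \in sval r).
Proof.
rewrite -(@upclosed_exists_le _ (@subset_rel k) _ _ (fun c => subxx c) (valP r)).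
apply: eq_existsb => d; congr (_ && _); rewrite /subset_rel.
apply/forallP/subsetP => [H l | H l]; first by rewrite inE; apply: (implyP (H l)).
by apply/implyP => /H; rewrite inE.
Qed.

Lemma keval_subst k m (g : hom k m) r w : keval (substDM g r) w = keval r (face_map g w).
Proof.
rewrite /keval /substDM /= !inE !exists_clause_sub.
have -> : [set l | clause_of w \in sval (litDM g l)] = clause_of (face_map g w).
  by apply/setP => l; rewrite inE -keval_true keval_lit lit_eval_true.
have -> // :
    [set l | nonfalse_clause w \in sval (litDM g l)] = nonfalse_clause (face_map g w).
by apply/setP => l; rewrite inE -keval_nonfalse keval_lit lit_eval_nonfalse.
Qed.

Lemma face_map_comp k' k m (g : hom k m) (h : hom k' k) w :
  face_map (compC g h) w = face_map g (face_map h w).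
Proof. by apply/ffunP => j; rewrite !ffunE keval_subst. Qed.

Lemma in_restrF k m (g : hom k m) phi w :
  (w \in sval (restrF g phi)) = (face_map g w \in sval phi).
Proof.
rewrite inE -(upclosed_exists_le _ (@leface_refl m) (valP phi)).
apply: eq_existsb => c; congr (_ && _); apply: eq_forallb => j.
case: (c j) => // b; rewrite inE -keval_true keval_lit.
by case: b; rewrite /lit_eval /=; case: (face_map g w j) => [[]|].
Qed.

Lemma subst_var k m (h : hom k m) j : substDM h (varDM j) = h j.
Proof. by apply: val_inj; apply/setP => c; rewrite inE exists_clause_sub !inE. Qed.

Definition weaken m : hom m.+1 m := [ffun j => varDM (lift ord_max j)].

Definition pairC k m (g : hom k m) (r : DM k) : hom k m.+1 :=
  [ffun j => if unlift ord_max j is Some j' then g j' else r].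

Lemma weaken_pairC k m (g : hom k m) r : compC (weaken m) (pairC g r) = g.
Proof. by apply/ffunP => j; rewrite !ffunE subst_var ffunE liftK. Qed.

Lemma pairC_var k m (g : hom k m) r : substDM (pairC g r) (varDM ord_max) = r.
Proof. by rewrite subst_var ffunE unlift_none. Qed.

Definition face_ext m (e : face m) (o : option bool) : face m.+1 :=
  [ffun j => if unlift ord_max j is Some j' then e j' else o].

Lemma face_map_weaken m (e : face m) o : face_map (weaken m) (face_ext e o) = e.
Proof. by apply/ffunP => j; rewrite !ffunE keval_var ffunE liftK. Qed.

Lemma face_map_pairC k m (g : hom k m) r w :
  face_map (pairC g r) w = face_ext (face_map g w) (keval r w).
Proof.
by apply/ffunP => j; rewrite !ffunE; case: (unlift ord_max j) => [j'|]; rewrite ?ffunE.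
Qed.

Lemma leface_ext_free m (e e' : face m) o :
  leface e e' -> leface (face_ext e None) (face_ext e' o).
Proof.
move=> le_ee'; apply/forallP => j; rewrite !ffunE.
by case: (unlift ord_max j) => [j'|] //; apply: (forallP le_ee').
Qed.

Definition generic m (f : FI m) : FF m.+1 := fam f (weaken m) (varDM ord_max).

Lemma fam_restr_generic m (f : FI m) k (g : hom k m) r :
  fam f g r = restrF (pairC g r) (generic f).
Proof. by rewrite /generic fam_nat weaken_pairC pairC_var. Qed.

Definition forallF_set m (f : FI m) : {set face m} :=
  [set e | face_ext e None \in sval (generic f)].

Lemma forallF_up m (f : FI m) : upclosedb (@leface m) (forallF_set f).
Proof.
apply/forallP => e; apply/forallP => e'; apply/implyP => /andP[].
rewrite !inE => fe le_ee'.
exact: upclosedP (valP _) fe (leface_ext_free _ le_ee').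
Qed.

Definition forallF m (f : FI m) : FF m :=
  exist (fun S => is_true (upclosedb _ S)) _ (forallF_up f).

Lemma in_forallF m (f : FI m) e :
  (e \in sval (forallF f)) = (face_ext e None \in sval (generic f)).
Proof. by rewrite inE. Qed.

Lemma forallF_restr m m' (u : hom m' m) (f : FI m) (f' : FI m') :
    (forall k (g : hom k m') (r : DM k), fam f' g r = fam f (compC u g) r) ->
  forallF f' = restrF u (forallF f).
Proof.
move=> f'_restr; apply: val_inj; apply/setP => e.
rewrite in_restrF !in_forallF /generic f'_restr fam_restr_generic in_restrF.
by rewrite face_map_pairC face_map_comp face_map_weaken keval_var ffunE unlift_none.
Qed.

Lemma forallF_adjoint m (phi : FF m) (f : FI m) :
  (forall k (g : hom k m) (r : DM k), leF (restrF g phi) (fam f g r))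
  <-> leF phi (forallF f).
Proof.
split => [le_phi_f | le_phi_all k g r].
- apply/subsetP => e phi_e; rewrite in_forallF.
  apply: (subsetP (le_phi_f _ (weaken m) (varDM ord_max))).
  by rewrite in_restrF face_map_weaken.
- apply/subsetP => w; rewrite in_restrF fam_restr_generic in_restrF face_map_pairC.
  move=> /(subsetP le_phi_all); rewrite in_forallF => generic_ext.
  exact: upclosedP (valP _) generic_ext (leface_ext_free _ (leface_refl _)).
Qed.

Theorem mainTheorem6 :
  exists forallF : forall m, FI m -> FF m,
    (* forallF is a morphism F^I -> F of cubical sets (natural in m):
       for u : m' -> m, forallF (f . u) = (forallF f) . u, where f . u is
       the restriction of f along u, (f . u)_k(g, r) = f_k(u \o g, r) *)
    (forall (m m' : nat) (u : hom m' m) (f : FI m) (f' : FI m'),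
        (forall k (g : hom k m') (r : DM k),
            fam f' g r = fam f (compC u g) r) ->
        forallF m' f' = restrF u (forallF m f)) /\
    (* internal adjunction (Kripke-Joyal reading of
       (forall i : I, phi => f i) <-> (phi => forallF f)) *)
    (forall (m : nat) (phi : FF m) (f : FI m),
        (forall k (g : hom k m) (r : DM k), leF (restrF g phi) (fam f g r))
        <-> leF phi (forallF m f)).
Proof. by exists forallF; split; [exact: forallF_restr | exact: forallF_adjoint]. Qed.
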